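(* The category $\mathbf{MetCH_{sep}}^{\mathrm{op}}$ is a regular category.
   Context: A metric on a set $X$ is a map $d\colon X\times X\to[0,\infty]$ (not necessarily symmetric, the value $\infty$ allowed) with $d(x,x)=0$ and $d(x,z)\le d(x,y)+d(y,z)$; it is separated if $d(x,y)=0=d(y,x)$ implies $x=y$. The upper topology on $[0,\infty]$ has as nonempty proper open sets the sets $]u,\infty]$. A separated metric compact Hausdorff space is a compact Hausdorff space $X$ with a separated metric $d$ continuous as a map $X\times X\to[0,\infty]$ with the upper topology on $[0,\infty]$. $\mathbf{MetCH_{sep}}$ is the category of such spaces and continuous non-expansive maps ($d_Y(f(x),f(y))\le d_X(x,y)$). A category is regular if it is finitely complete, has coequalisers of kernel pairs, and regular epimorphisms are stable under pullback. *)

From HB Require Import structures.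
From mathcomp Require Import all_boot all_order all_algebra.
From mathcomp Require Import all_classical all_reals.
From mathcomp Require Import topology ereal.
From mathcomp Require Import Rstruct Rstruct_topology.
Set Implicit Arguments. Unset Strict Implicit. Unset Printing Implicit Defensive.
Import Order.TTheory GRing.Theory Num.Theory.

Record category := Category {
  ob :> Type;
  hom : ob -> ob -> Type;
  idm : forall a, hom a a;
  comp : forall a b c, hom b c -> hom a b -> hom a c;
  comp_idl : forall a b (f : hom a b), comp (idm b) f = f;
  comp_idr : forall a b (f : hom a b), comp f (idm a) = f;
  comp_assoc : forall a b c d (f : hom a b) (g : hom b c) (h : hom c d),
    comp h (comp g f) = comp (comp h g) f }.

Arguments hom {C} a b : rename.
Arguments idm {C} a : rename.
Arguments comp {C a b c} _ _ : rename.

Definition op (C : category) : category :=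
  @Category C (fun a b => @hom C b a) (fun a => @idm C a)
    (fun a b c (g : @hom C c b) (f : @hom C b a) => comp f g)
    (fun a b f => comp_idr f) (fun a b f => comp_idl f)
    (fun a b c d f g h => esym (comp_assoc h g f)).

Section CatDefs.
Variable C : category.

Definition is_terminal (t : C) := forall a : C, exists! f : hom a t, True.

Definition is_pullback (a b c : C) (f : hom a c) (g : hom b c)
    (p : C) (p1 : hom p a) (p2 : hom p b) :=
  comp f p1 = comp g p2 /\
  forall (q : C) (q1 : hom q a) (q2 : hom q b), comp f q1 = comp g q2 ->
    exists! u : hom q p, comp p1 u = q1 /\ comp p2 u = q2.

Definition is_kernel_pair (a b : C) (f : hom a b) (p : C) (p1 p2 : hom p a) :=
  is_pullback f f p1 p2.

Definition is_coequaliser (a b : C) (u v : hom a b) (q : C) (e : hom b q) :=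
  comp e u = comp e v /\
  forall (z : C) (h : hom b z), comp h u = comp h v ->
    exists! k : hom q z, comp k e = h.

Definition regular_epi (b q : C) (e : hom b q) :=
  exists (a : C) (u v : hom a b), is_coequaliser u v e.

Definition finitely_complete :=
  (exists t : C, is_terminal t) /\
  forall (a b c : C) (f : hom a c) (g : hom b c),
    exists (p : C) (p1 : hom p a) (p2 : hom p b), is_pullback f g p1 p2.

Definition has_coequalisers_of_kernel_pairs :=
  forall (a b : C) (f : hom a b) (p : C) (p1 p2 : hom p a),
    is_kernel_pair f p1 p2 -> exists (q : C) (e : hom a q), is_coequaliser p1 p2 e.

Definition regular_epis_pullback_stable :=
  forall (a b c : C) (f : hom a c) (g : hom b c) (p : C) (p1 : hom p a)
    (p2 : hom p b), regular_epi f -> is_pullback f g p1 p2 -> regular_epi p2.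

Definition regular_category :=
  [/\ finitely_complete, has_coequalisers_of_kernel_pairs
    & regular_epis_pullback_stable].

End CatDefs.

Local Open Scope classical_set_scope.
Local Open Scope ereal_scope.

Record metCH_sep := MetCHsep {
  mc_car :> topologicalType;
  mc_d : mc_car -> mc_car -> \bar Rdefinitions.R;
  mc_d_ge0 : forall x y, 0 <= mc_d x y;
  mc_d_refl : forall x, mc_d x x = 0;
  mc_d_triangle : forall x y z, mc_d x z <= mc_d x y + mc_d y z;
  mc_d_sep : forall x y, mc_d x y = 0 -> mc_d y x = 0 -> x = y;
  mc_hausdorff : hausdorff_space mc_car;
  mc_compact : compact [set: mc_car];
  (* continuity of d : X x X -> [0,oo] for the upper topology, whose
     nonempty proper open sets are ]u, oo] for u in [0, oo[ *)
  mc_d_cont : forall u : Rdefinitions.R, (0 <= u)%R ->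
    open [set pq : mc_car * mc_car | u%:E < mc_d pq.1 pq.2] }.

Record mc_hom (X Y : metCH_sep) := MCHom {
  mc_fun :> X -> Y;
  mc_fun_cont : continuous mc_fun;
  mc_fun_nonexp : forall x y, mc_d (mc_fun x) (mc_fun y) <= mc_d x y }.

Lemma mc_hom_eq (X Y : metCH_sep) (f g : mc_hom X Y) :
  mc_fun f = mc_fun g -> f = g.
Proof.
case: f g => f1 c1 n1 [f2 c2 n2] /= E; subst f2.
by rewrite (Prop_irrelevance c1 c2) (Prop_irrelevance n1 n2).
Qed.

Definition mc_id (X : metCH_sep) : mc_hom X X.
Proof. by apply: (@MCHom X X id) => // x; exact: cvg_id. Defined.

Definition mc_comp (X Y Z : metCH_sep) (g : mc_hom Y Z) (f : mc_hom X Y) :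
  mc_hom X Z.
Proof.
apply: (@MCHom X Z (g \o f)).
- by move=> x; apply: continuous_comp; [exact: mc_fun_cont|exact: mc_fun_cont].
- by move=> x y /=; apply: le_trans (mc_fun_nonexp g _ _) (mc_fun_nonexp f _ _).
Defined.

Definition MetCH_sep : category.
Proof.
refine (@Category metCH_sep mc_hom mc_id mc_comp _ _ _).
- by move=> a b f; apply: mc_hom_eq.
- by move=> a b f; apply: mc_hom_eq.
- by move=> a b c d f g h; apply: mc_hom_eq.
Defined.

(* Regularity of MetCH_sep^op means that MetCH_sep has an initial object (the empty
   space), pushouts and equalisers, and that regular monomorphisms are stable under
   pushout.  Equalisers are closed subspaces with the restricted metric.  Pushouts are
   quotients of the coproduct by the supremum of the metrics induced by all cocones:
   identifying the points at distance 0 in both directions, a compact Hausdorff space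
   with a lower semicontinuous metric yields again a separated metric compact Hausdorff
   space, by a saturation argument.
   Regular monomorphisms are exactly the isometries.  An equaliser is isometric since
   it is isomorphic to a subspace; conversely an isometry p : B -> P is the equaliser
   of the two maps into the space obtained by gluing two copies of P along p, and
   gluing A and B along an isometry f : C -> A embeds B isometrically, so that the
   pushout of f along any g is again an isometry. *)

From mathcomp Require Import all_boot all_order all_algebra generic_quotient.
From mathcomp Require Import all_classical all_reals.
From mathcomp Require Import topology ereal normedtype.
From mathcomp Require Import Rstruct Rstruct_topology.
From mathcomp Require Import lra.
Set Implicit Arguments. Unset Strict Implicit. Unset Printing Implicit Defensive.
Import Order.TTheory GRing.Theory Num.Theory.
Local Open Scope classical_set_scope.
Local Open Scope ereal_scope.

Local Notation R := Rdefinitions.R.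

(** * Extended reals and lower semicontinuity *)

Lemma lte_splitD (a : R) (x y : \bar R) : 0 <= x -> 0 <= y -> a%:E < x + y ->
  exists s t : R, [/\ s%:E < x, t%:E < y & (a <= s + t)%R].
Proof.
case: x => [r| |] //; case: y => [r'| |] // x0 y0.
- rewrite -EFinD lte_fin => ar; pose e := ((r + r' - a) / 2)%R.
  exists (r - e)%R, (r' - e)%R; rewrite !lte_fin /e; split; lra.
- by move=> _; exists (r - 1)%R, (a - r + 1)%R; rewrite !lte_fin ltry; split=> //; lra.
- by move=> _; exists (a - r' + 1)%R, (r' - 1)%R; rewrite !lte_fin ltry; split=> //; lra.
- by move=> _; exists a, 0%R; rewrite !ltry; split=> //; lra.
Qed.

Lemma lte_EFin_dense (x : \bar R) (a : R) : a%:E < x ->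
  exists2 b : R, (a < b)%R & b%:E < x.
Proof.
case: x => [r| |] // ar.
- by exists ((a + r) / 2)%R; rewrite ?lte_fin in ar *; lra.
- by exists (a + 1)%R; [lra|exact: ltry].
Qed.

Section ereal_inf_add.
Context (T : Type) (F : T -> \bar R) (a b : \bar R).
Hypotheses (a0 : 0 <= a) (F0 : forall t, 0 <= F t).

Lemma le_ereal_infDl : (forall t, b <= a + F t) -> b <= a + ereal_inf (range F).
Proof.
move=> bF; have inf0 : 0 <= ereal_inf (range F) by apply/ereal_infP => _ [t _ <-].
case: a a0 bF => [r| |] // _ bF.
  by rewrite -leeBlDl //; apply/ereal_infP => _ [t _ <-]; rewrite leeBlDl.
by rewrite addye ?leey // gt_eqF // (lt_le_trans _ inf0) ?ltNy0.
Qed.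

Lemma le_ereal_infDr : (forall t, b <= F t + a) -> b <= ereal_inf (range F) + a.
Proof. by move=> bF; rewrite addeC; apply: le_ereal_infDl => t; rewrite addeC. Qed.

End ereal_inf_add.

Section lower_semicontinuous.
Context {T : topologicalType}.
Implicit Types F G : T -> \bar R.

Lemma lower_semicontinuous_near F : lower_semicontinuous F <->
  forall x (a : R), a%:E < F x -> \forall y \near x, a%:E < F y.
Proof.
split=> [lF x a /lF [V xV VF]|lF x a /lF aF]; first exact: filterS xV.
by exists [set y | a%:E < F y].
Qed.

Lemma lower_semicontinuous_open F (a : R) : lower_semicontinuous F ->
  open [set x | a%:E < F x].
Proof. by move/lower_semicontinuousP. Qed.

Lemma lower_semicontinuousD F G : (forall x, 0 <= F x) -> (forall x, 0 <= G x) ->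
  lower_semicontinuous F -> lower_semicontinuous G ->
  lower_semicontinuous (fun x => F x + G x).
Proof.
move=> F0 G0 /lower_semicontinuous_near lF /lower_semicontinuous_near lG.
apply/lower_semicontinuous_near => x a /(lte_splitD (F0 x) (G0 x)) [s [t [sF tG ast]]].
near=> y; apply: (@le_lt_trans _ _ (s + t)%:E); first by rewrite lee_fin.
rewrite EFinD; apply: lteD.
- by near: y; exact: lF.
- by near: y; exact: lG.
Unshelve. all: end_near.
Qed.

Lemma lower_semicontinuous_min F G : lower_semicontinuous F ->
  lower_semicontinuous G -> lower_semicontinuous (fun x => Order.min (F x) (G x)).
Proof.
move=> /lower_semicontinuous_near lF /lower_semicontinuous_near lG.
apply/lower_semicontinuous_near => x a; rewrite lt_min => /andP [/lF aF /lG aG].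
by apply: filterS (filterI aF aG) => y [? ?]; rewrite lt_min; apply/andP.
Qed.

Lemma lower_semicontinuous_comp (S : topologicalType) (h : S -> T) F :
  continuous h -> lower_semicontinuous F -> lower_semicontinuous (F \o h).
Proof.
move=> ch /lower_semicontinuousP lF; apply/lower_semicontinuousP => a.
exact: (proj1 (continuousP h) ch _ (lF a)).
Qed.

Lemma lower_semicontinuous_cst (c : \bar R) : lower_semicontinuous (cst c : T -> \bar R).
Proof. by move=> x a ac; exists setT; [exact: filterT|]. Qed.

Lemma lower_semicontinuous_ereal_sup (I : set (T -> \bar R)) :
  (forall F, I F -> lower_semicontinuous F) ->
  lower_semicontinuous (fun x => ereal_sup [set F x | F in I]).
Proof.
move=> lI x a /ereal_sup_gtP [_ [F IF <-] /(lI F IF) [V xV VF]].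
exists V => // y /VF aF; apply: lt_le_trans aF _.
by apply: ereal_sup_ubound; exists F.
Qed.

End lower_semicontinuous.

Lemma tube_lemma (X Y : topologicalType) (K : set Y) (W : set (X * Y)) x :
  compact K -> open W -> (forall y, K y -> W (x, y)) ->
  \forall x' \near x, forall y, K y -> W (x', y).
Proof.
move=> /compact_near_coveringP cK oW KW.
apply: (cK X (nbhs x) (fun x' y => W (x', y))) => y Ky.
have [[P Q] [Px Qy] PQW] : nbhs (x, y) W by apply: open_nbhs_nbhs; split=> //; exact: KW.
by exists (Q, P) => // -[y' x'] [Qy' Px']; exact: PQW.
Qed.

Section ereal_inf_compact.
Context (X C : topologicalType) (cC : compact [set: C]).

Lemma lower_semicontinuous_ereal_inf (F : X * C -> \bar R) :
  lower_semicontinuous F ->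
  lower_semicontinuous (fun x => ereal_inf [set F (x, c) | c in setT]).
Proof.
move=> /lower_semicontinuousP lF; apply/lower_semicontinuous_near => x a.
move=> /lte_EFin_dense [b ab bF].
have : forall c, setT c -> [set p | b%:E < F p] (x, c).
  by move=> c _ /=; apply: lt_le_trans bF _; apply: ereal_inf_lbound; exists c.
move=> /(tube_lemma cC (lF b)); apply: filterS => x' bF'.
apply: (@lt_le_trans _ _ b%:E); first by rewrite lte_fin.
by apply/ereal_infP => _ [c _ <-]; apply/ltW; exact: bF'.
Qed.

Lemma ereal_inf_gt0_compact (G : C -> \bar R) : lower_semicontinuous G ->
  (forall c, 0 < G c) -> 0 < ereal_inf (range G).
Proof.
move=> /lower_semicontinuous_near lG G0.
have oW : open [set p : R * C | p.1%:E < G p.2].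
  rewrite openE => -[r c] /= /lte_EFin_dense [b rb bG].
  exists ([set r' | (r' < b)%R], [set c' | b%:E < G c']) => /=.
    by split; [apply: open_nbhs_nbhs; split; [exact: open_lt|]|exact: lG].
  by move=> [r' c'] /= [r'b bG']; apply: lt_trans bG'; rewrite lte_fin.
have /(tube_lemma cC oW) /= near0 :
    forall c, setT c -> [set p : R * C | p.1%:E < G p.2] (0%R, c).
  by move=> c _; exact: G0.
near (0%R : R)^'+ => e.
have eG : forall c, e%:E < G c.
  by near: e; rewrite near_withinE; apply: filterS near0 => e' eG _ c; exact: eG.
apply: (@lt_le_trans _ _ e%:E); first by rewrite lte_fin; near: e; exact: nbhs_right_gt.
by apply/ereal_infP => _ [c _ <-]; apply/ltW.
Unshelve. all: end_near.
Qed.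

End ereal_inf_compact.

(** * Products, coproducts and subspaces *)

Lemma continuous_pair (X Y Z : topologicalType) (f : X -> Y) (g : X -> Z) :
  continuous f -> continuous g -> continuous (fun x => (f x, g x)).
Proof. by move=> cf cg x; apply: cvg_pair; [exact: cf|exact: cg]. Qed.

Lemma comp_continuous (X Y Z : topologicalType) (f : X -> Y) (g : Y -> Z) :
  continuous f -> continuous g -> continuous (g \o f).
Proof. by move=> cf cg x; apply: continuous_comp; [exact: cf|exact: cg]. Qed.

Lemma continuous_fst (X Y : topologicalType) : continuous (@fst X Y).
Proof. by move=> [x y]; exact: cvg_fst. Qed.

Lemma continuous_snd (X Y : topologicalType) : continuous (@snd X Y).
Proof. by move=> [x y]; exact: cvg_snd. Qed.

Lemma continuous_fst_comp (X Y Z : topologicalType) (h : X -> Z) :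
  continuous h -> continuous (fun p : X * Y => h p.1).
Proof. by move=> ch; exact: (comp_continuous (@continuous_fst _ _) ch). Qed.

Lemma continuous_snd_comp (X Y Z : topologicalType) (h : Y -> Z) :
  continuous h -> continuous (fun p : X * Y => h p.2).
Proof. by move=> ch; exact: (comp_continuous (@continuous_snd _ _) ch). Qed.

Lemma continuous_pairl (X Y : topologicalType) (x : X) : continuous (fun y : Y => (x, y)).
Proof. by apply: continuous_pair; [exact: cst_continuous|move=> ?; exact: cvg_id]. Qed.

Lemma hausdorff_prod (X Y : topologicalType) :
  hausdorff_space X -> hausdorff_space Y -> hausdorff_space (X * Y)%type.
Proof.
move=> hX hY [p1 p2] [q1 q2] pq.
have nbhsX (x : X) (y : Y) A : nbhs x A -> nbhs (x, y) (A `*` setT).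
  by move=> xA; exists (A, setT) => //; split=> //; exact: filterT.
have nbhsY (x : X) (y : Y) B : nbhs y B -> nbhs (x, y) (setT `*` B).
  by move=> yB; exists (setT, B) => //; split=> //; exact: filterT.
congr pair; [apply: hX => A B pA qB|apply: hY => A B pA qB].
- have [[z1 z2] [[/= Az _] [/= Bz _]]] := pq _ _ (nbhsX _ p2 _ pA) (nbhsX _ q2 _ qB).
  by exists z1.
- have [[z1 z2] [[_ /= Az] [_ /= Bz]]] := pq _ _ (nbhsY p1 _ _ pA) (nbhsY q1 _ _ qB).
  by exists z2.
Qed.

Section coproduct.
Context (A B : topologicalType).

Definition coprod_family (b : bool) : topologicalType := if b then A else B.
Definition coprod := {b : bool & coprod_family b}.
Definition cinl (a : A) : coprod := existT coprod_family true a.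
Definition cinr (b : B) : coprod := existT coprod_family false b.

Definition copair (Z : Type) (h : A -> Z) (k : B -> Z) (x : coprod) : Z :=
  match x with existT true a => h a | existT false b => k b end.

Lemma continuous_cinl : continuous cinl.
Proof. exact: (@existT_continuous _ coprod_family true). Qed.

Lemma continuous_cinr : continuous cinr.
Proof. exact: (@existT_continuous _ coprod_family false). Qed.

Lemma continuous_copair (Z : topologicalType) (h : A -> Z) (k : B -> Z) :
  continuous h -> continuous k -> continuous (copair h k).
Proof. by move=> ch ck [[] x]; [exact: ch|exact: ck]. Qed.

Lemma compact_coprod : compact [set: A] -> compact [set: B] -> compact [set: coprod].
Proof. by move=> cA cB; apply: sigT_compact => [|[]]; [exact: finite_finset|..]. Qed.

Lemma hausdorff_coprod : hausdorff_space A -> hausdorff_space B ->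
  hausdorff_space coprod.
Proof. by move=> hA hB; apply: sigT_hausdorff => -[]. Qed.

Lemma lower_semicontinuous_coprod2 (F : coprod * coprod -> \bar R) :
  (forall i j, lower_semicontinuous
    (fun p : coprod_family i * coprod_family j => F (existT _ i p.1, existT _ j p.2))) ->
  lower_semicontinuous F.
Proof.
move=> lF [[i x] [j y]] a /(lF i j (x, y)) [W [[P Q] /= [Px Qy] PQW] WF].
exists (existT _ i @` P `*` existT _ j @` Q).
  by exists (existT _ i @` P, existT _ j @` Q) => //; split; exact: existT_nbhs.
move=> [_ _] [/= [x' Px' <-] [y' Qy' <-]]; apply: (WF (x', y')); exact: PQW.
Qed.

End coproduct.
Arguments cinl {A B}.
Arguments cinr {A B}.

Section subtype.
Context (X : topologicalType) (A : set X).

Lemma open_set_valP (O : set (set_type A)) :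
  open O -> exists2 U : set X, open U & set_val @^-1` U = O.
Proof. by case=> U oU <-; exists U. Qed.

Lemma hausdorff_set_type : hausdorff_space X -> hausdorff_space (set_type A).
Proof.
rewrite !open_hausdorff => hX x y /eqP xy.
have /hX [[U V] /= [Ux Vy] [oU oV /eqP UV]] : set_val x != set_val y.
  by apply/eqP => /val_inj.
exists (set_val @^-1` U, set_val @^-1` V); rewrite /= !inE; first by rewrite !inE in Ux Vy.
split; [by exists U|by exists V|].
by rewrite -preimage_setI UV preimage_set0.
Qed.

Lemma compact_set_type : compact A -> compact [set: set_type A].
Proof.
move=> /compact_near_coveringP cA; apply/compact_near_coveringP.
move=> I F P FF cov.
have : \near F, A `<=` (fun x => forall h : x \in A, P F (exist _ x h)).
  apply: cA => x Ax.
  have [[O E] /= [Ox FE] OEP] := cov (exist _ x (mem_set Ax)) Logic.I.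
  have [U [oU Ux] UO] : exists2 U : set X, open_nbhs x U &
      (set_val @^-1` U : set (set_type A)) `<=` O.
    move: Ox; rewrite nbhsE => -[O' [/open_set_valP [U oU <-] Ux] O'O].
    by exists U.
  exists (U, E) => /=; first by split => //; exact: open_nbhs_nbhs.
  move=> [x' i] /= [Ux' Ei] h; apply: (OEP (exist _ x' h, i)); split => //.
  exact: UO.
by apply: filterS => i H [x h] _; exact: (H x (set_mem h) h).
Qed.

End subtype.

(** * Quotients by lower semicontinuous metrics *)

Lemma mc_hom_ext (X Y : metCH_sep) (f g : mc_hom X Y) :
  (forall x, f x = g x) -> f = g.
Proof. by move=> fg; apply: mc_hom_eq; apply: funext. Qed.

Lemma lower_semicontinuous_mc_d (Z : metCH_sep) :
  lower_semicontinuous (fun p : Z * Z => mc_d p.1 p.2).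
Proof.
apply/lower_semicontinuousP => a; have [a0|a0] := leP 0%R a; first exact: mc_d_cont.
rewrite (_ : [set _ | _] = setT); first exact: openT.
by apply/seteqP; split=> // p _ /=; apply: lt_le_trans (mc_d_ge0 _ _); rewrite lte_fin.
Qed.

Lemma lower_semicontinuous_mc_d_comp (T : topologicalType) (Z : metCH_sep)
    (phi psi : T -> Z) : continuous phi -> continuous psi ->
  lower_semicontinuous (fun t => mc_d (phi t) (psi t)).
Proof.
move=> cphi cpsi.
exact: (lower_semicontinuous_comp (continuous_pair cphi cpsi) (@lower_semicontinuous_mc_d Z)).
Qed.

Lemma mc_d_le0_sep (Z : metCH_sep) (x y : Z) : mc_d x y <= 0 -> mc_d y x <= 0 -> x = y.
Proof. by move=> xy yx; apply: mc_d_sep; apply/le_anti; rewrite ?mc_d_ge0 ?xy ?yx. Qed.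

Record lsc_metric (S : topologicalType) := LscMetric {
  lm_d :> S -> S -> \bar R;
  lm_d_ge0 : forall x y, 0 <= lm_d x y;
  lm_d_refl : forall x, lm_d x x = 0;
  lm_d_triangle : forall x y z, lm_d x z <= lm_d x y + lm_d y z;
  lm_d_lsc : lower_semicontinuous (fun p : S * S => lm_d p.1 p.2) }.
Arguments lm_d_lsc {S} l.

Section lsc_metric_theory.
Context (S : topologicalType) (d : lsc_metric S).

Definition d_equiv x y := d x y = 0 /\ d y x = 0.

Lemma lm_d_le0 x y : d x y <= 0 -> d x y = 0.
Proof. by move=> xy; apply/le_anti; rewrite xy lm_d_ge0. Qed.

Lemma d_equiv_refl x : d_equiv x x. Proof. by split; rewrite lm_d_refl. Qed.

Lemma d_equiv_sym x y : d_equiv x y -> d_equiv y x. Proof. by case. Qed.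

Lemma d_equiv_trans x y z : d_equiv x y -> d_equiv y z -> d_equiv x z.
Proof.
move=> [xy yx] [yz zy]; split; apply: lm_d_le0.
- by apply: le_trans (lm_d_triangle d x y z) _; rewrite xy yz adde0.
- by apply: le_trans (lm_d_triangle d z y x) _; rewrite zy yx adde0.
Qed.

Lemma d_equiv_congr x x' y y' : d_equiv x x' -> d_equiv y y' -> d x y = d x' y'.
Proof.
move=> [xx' x'x] [yy' y'y]; apply/le_anti/andP; split.
- apply: le_trans (lm_d_triangle d x x' y) _; rewrite xx' add0e.
  by apply: le_trans (lm_d_triangle d x' y' y) _; rewrite y'y adde0.
- apply: le_trans (lm_d_triangle d x' x y') _; rewrite x'x add0e.
  by apply: le_trans (lm_d_triangle d x y y') _; rewrite yy' adde0.
Qed.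

Lemma not_d_equiv x y : ~ d_equiv x y -> 0 < d x y \/ 0 < d y x.
Proof.
rewrite !lt0e !lm_d_ge0 !andbT => xy; apply/orP; apply: contra_notT xy.
by rewrite negb_or !negbK => /andP [/eqP ? /eqP ?].
Qed.

Lemma open_d_apart : open [set p : S * S | 0 < d p.1 p.2 \/ 0 < d p.2 p.1].
Proof.
apply: openU; first exact: lower_semicontinuous_open (lm_d_lsc d).
apply: lower_semicontinuous_open.
exact: (lower_semicontinuous_comp (@swap_continuous S S) (lm_d_lsc d)).
Qed.

Lemma closed_d_class x : closed [set y | d_equiv x y].
Proof.
rewrite (_ : [set y | d_equiv x y] = ~` [set y | 0 < d x y \/ 0 < d y x]).
  by rewrite closedC; exact: (proj1 (continuousP _) (@continuous_pairl S S x) _ open_d_apart).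
apply/seteqP; split=> y /=; first by move=> [-> ->] [|]; rewrite ltxx.
by move=> yx; apply: contrapT => /not_d_equiv.
Qed.

Definition d_saturation (U : set S) := [set x | forall y, d_equiv x y -> U y].

Lemma d_saturation_equiv U x y : d_saturation U x -> d_equiv x y -> d_saturation U y.
Proof. by move=> xU xy z yz; apply: xU; exact: d_equiv_trans xy yz. Qed.

Lemma open_d_saturation (U : set S) : compact [set: S] -> open U -> open (d_saturation U).
Proof.
move=> cS oU; rewrite openE => x /= xU.
have cCU : compact (~` U) by apply: subclosed_compact cS _ => //; exact: open_closedC.
have := tube_lemma cCU open_d_apart (x := x).
have /[swap]/[apply] : forall y, (~` U) y -> 0 < d x y \/ 0 < d y x.
  by move=> y Uy; apply: not_d_equiv => xy; exact: Uy (xU _ xy).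
apply: filterS => x' x'U y [x'y yx'].
by apply: contrapT => /x'U /=; rewrite x'y yx' ltxx; case.
Qed.

End lsc_metric_theory.

Section quotient.
Context (S : topologicalType) (d : lsc_metric S).
Hypotheses (hS : hausdorff_space S) (cS : compact [set: S]).
Local Open Scope quotient_scope.

Definition d_equivb : rel S := fun x y => `[< d_equiv d x y >].

Lemma d_equivb_refl : reflexive d_equivb.
Proof. by move=> x; apply/asboolP; exact: d_equiv_refl. Qed.

Lemma d_equivb_sym : symmetric d_equivb.
Proof. by move=> x y; apply/asboolP/asboolP; exact: d_equiv_sym. Qed.

Lemma d_equivb_trans : transitive d_equivb.
Proof. by move=> y x z /asboolP xy /asboolP yz; apply/asboolP; exact: d_equiv_trans xy yz. Qed.

Definition d_equiv_rel := EquivRel d_equivb d_equivb_refl d_equivb_sym d_equivb_trans.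

Definition quotient_carrier := quotient_topology {eq_quot d_equiv_rel}.

Definition qpi : S -> quotient_carrier := \pi.

Lemma qpi_eqP x y : qpi x = qpi y <-> d_equiv d x y.
Proof.
have /rwP qE := @eqquotP _ d_equiv_rel {eq_quot d_equiv_rel} x y.
exact: iff_trans qE (iff_sym (rwP (asboolP _))).
Qed.

Lemma qpi_repr (P : quotient_carrier) : qpi (repr P) = P.
Proof. exact: reprK. Qed.

Lemma d_equiv_repr x : d_equiv d (repr (qpi x)) x.
Proof. by apply/qpi_eqP; rewrite qpi_repr. Qed.

Lemma qpi_surj (P : quotient_carrier) : exists x, qpi x = P.
Proof. by exists (repr P); exact: qpi_repr. Qed.

Lemma continuous_qpi : continuous qpi.
Proof. exact: pi_continuous. Qed.

Lemma open_qpi_image (O : set S) : open O ->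
  (forall x y, O x -> d_equiv d x y -> O y) -> open (qpi @` O).
Proof.
move=> oO satO; rewrite /open /= /quotient_open.
rewrite (_ : _ @^-1` _ = O) //; apply/seteqP; split=> [x [y Oy /qpi_eqP yx]|x Ox].
- exact: satO yx.
- by exists x.
Qed.

Lemma hausdorff_quotient : hausdorff_space quotient_carrier.
Proof.
rewrite open_hausdorff => P P'.
have [x <-] := qpi_surj P; have [y <-] := qpi_surj P' => PP'.
have nxy : ~ d_equiv d x y by move=> /qpi_eqP xy; rewrite xy eqxx in PP'.
(* Separate the two closed classes by normality, then pass to saturations. *)
have [C /set_nbhsP [U [oU xU UC]] cCy] :
    filter_from (set_nbhs [set z | d_equiv d x z]) closure (~` [set z | d_equiv d y z]).
  apply: (compact_normal hS cS (@closed_d_class _ d x)).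
  apply/set_nbhsP; exists (~` [set z | d_equiv d y z]); split=> //.
  - by rewrite openC; exact: closed_d_class.
  - by move=> z xz yz; apply: nxy; apply: d_equiv_trans xz (d_equiv_sym yz).
pose V := ~` closure C.
have UV z : U z -> V z -> False by move=> Uz; apply; apply: subset_closure; exact: UC.
have yV z : d_equiv d y z -> V z by move=> yz /cCy; apply.
exists (qpi @` d_saturation d U, qpi @` d_saturation d V) => /=.
  by rewrite !inE; split; [exists x => // z /xU|exists y => // z /yV].
split.
- apply: open_qpi_image (@d_saturation_equiv _ d U); exact: open_d_saturation.
- apply: open_qpi_image (@d_saturation_equiv _ d V); apply: open_d_saturation => //.
  by rewrite openC; exact: closed_closure.
- apply/eqP; rewrite -subset0 => _ [[a aU <-] [b bV /qpi_eqP ba]].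
  by apply: (UV a); [exact: aU (d_equiv_refl d a)|exact: bV ba].
Qed.

Definition quotient_d (P P' : quotient_carrier) := d (repr P) (repr P').

Lemma quotient_d_qpi x y : quotient_d (qpi x) (qpi y) = d x y.
Proof. exact: d_equiv_congr (d_equiv_repr x) (d_equiv_repr y). Qed.

Lemma compact_quotient : compact [set: quotient_carrier].
Proof.
rewrite (_ : [set: quotient_carrier] = qpi @` setT).
  exact/(continuous_compact (continuous_subspaceT continuous_qpi)).
by apply/seteqP; split=> // P _; have [x <-] := qpi_surj P; exists x.
Qed.

Lemma lower_semicontinuous_quotient_d :
  lower_semicontinuous (fun p : quotient_carrier * quotient_carrier => quotient_d p.1 p.2).
Proof.
apply/lower_semicontinuousP => a.
(* [quotient_d <= a] is the image of the compact set [d <= a], hence closed. *)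
pose K := [set p : S * S | d p.1 p.2 <= a%:E].
have cK : compact K.
  apply: subclosed_compact (compact_setX cS cS) _ => //.
  rewrite -openC (_ : ~` K = [set p | a%:E < d p.1 p.2]).
    exact: lower_semicontinuous_open (lm_d_lsc d).
  by apply/seteqP; split=> p /=; rewrite ltNge => /negP.
have cqpi2 : continuous (fun p : S * S => (qpi p.1, qpi p.2)).
  by apply: continuous_pair; apply: comp_continuous continuous_qpi;
    [exact: continuous_fst|exact: continuous_snd].
have hQQ := hausdorff_prod hausdorff_quotient hausdorff_quotient.
have := compact_closed hQQ (continuous_compact (continuous_subspaceT cqpi2) cK).
rewrite -openC; congr open; apply/seteqP; split=> -[P P'] /=.
- have [x xP] := qpi_surj P; have [y yP'] := qpi_surj P'.
  rewrite -xP -yP' quotient_d_qpi ltNge => Kxy; apply/negP => xyK; apply: Kxy.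
  by exists (x, y).
- move=> aP [[x y] /= Kxy [xP yP']]; move: aP.
  by rewrite -xP -yP' quotient_d_qpi ltNge Kxy.
Qed.

Lemma quotient_d_ge0 P P' : 0 <= quotient_d P P'.
Proof. exact: lm_d_ge0. Qed.

Lemma quotient_d_refl P : quotient_d P P = 0.
Proof. exact: lm_d_refl. Qed.

Lemma quotient_d_triangle P P' P'' : quotient_d P P'' <= quotient_d P P' + quotient_d P' P''.
Proof. exact: lm_d_triangle. Qed.

Lemma quotient_d_sep P P' : quotient_d P P' = 0 -> quotient_d P' P = 0 -> P = P'.
Proof. by move=> PP' P'P; rewrite -(qpi_repr P) -(qpi_repr P'); apply/qpi_eqP. Qed.

Lemma quotient_d_cont (u : R) : (0 <= u)%R ->
  open [set p : quotient_carrier * quotient_carrier | u%:E < quotient_d p.1 p.2].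
Proof. by move=> _; exact: lower_semicontinuous_open lower_semicontinuous_quotient_d. Qed.

Definition quotient_space : metCH_sep :=
  MetCHsep quotient_d_ge0 quotient_d_refl quotient_d_triangle quotient_d_sep
    hausdorff_quotient compact_quotient quotient_d_cont.

Section quotient_lift.
Context (Z : metCH_sep) (phi : S -> Z) (cphi : continuous phi)
  (nphi : forall x y, mc_d (phi x) (phi y) <= d x y).

Lemma d_equiv_lift x y : d_equiv d x y -> phi x = phi y.
Proof. by move=> [xy yx]; apply: mc_d_le0_sep; [rewrite -xy|rewrite -yx]. Qed.

Lemma continuous_quotient_lift : continuous (phi \o repr : quotient_space -> Z).
Proof.
apply: repr_comp_continuous cphi _ => x y /eqP /qpi_eqP xy.
by apply/eqP; exact: d_equiv_lift.
Qed.

Definition quotient_lift : mc_hom quotient_space Z :=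
  MCHom continuous_quotient_lift (fun P P' => nphi (repr P) (repr P')).

Lemma quotient_liftE x : quotient_lift (qpi x) = phi x.
Proof. exact: d_equiv_lift (d_equiv_repr x). Qed.

End quotient_lift.

Lemma quotient_hom_ext (Z : metCH_sep) (f g : mc_hom quotient_space Z) :
  (forall x, f (qpi x) = g (qpi x)) -> f = g.
Proof. by move=> fg; apply: mc_hom_ext => P; have [x <-] := qpi_surj P. Qed.

Section quotient_hom.
Context (A : metCH_sep) (j : A -> S) (cj : continuous j)
  (nj : forall a a', d (j a) (j a') <= mc_d a a').

Lemma continuous_quotient_hom : continuous (qpi \o j : A -> quotient_space).
Proof. exact: comp_continuous cj continuous_qpi. Qed.

Lemma quotient_hom_nonexp a a' :
  mc_d ((qpi \o j) a : quotient_space) ((qpi \o j) a') <= mc_d a a'.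
Proof. by rewrite /= quotient_d_qpi. Qed.

Definition quotient_hom : mc_hom A quotient_space :=
  MCHom continuous_quotient_hom quotient_hom_nonexp.

Lemma quotient_hom_d a a' : mc_d (quotient_hom a) (quotient_hom a') = d (j a) (j a').
Proof. exact: quotient_d_qpi. Qed.

End quotient_hom.

End quotient.

(** * The initial object and equalisers *)

Definition empty_carrier : topologicalType := discrete_topology void.

Definition empty_d (x y : empty_carrier) : \bar R := match x with end.

Lemma compact_empty : compact [set: empty_carrier].
Proof. by rewrite (_ : setT = set0); [exact: compact0|apply/seteqP; split=> -[]]. Qed.

Lemma empty_d_cont (u : R) : (0 <= u)%R ->
  open [set p : empty_carrier * empty_carrier | u%:E < empty_d p.1 p.2].
Proof.
by move=> _; rewrite (_ : [set _ | _] = set0); [exact: open0|apply/seteqP; split=> -[[]]].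
Qed.

Definition empty_space : metCH_sep :=
  @MetCHsep empty_carrier empty_d (fun x => match x with end) (fun x => match x with end)
    (fun x => match x with end) (fun x => match x with end) (fun x => match x with end)
    compact_empty empty_d_cont.

Definition empty_hom (Z : metCH_sep) : mc_hom empty_space Z :=
  @MCHom empty_space Z (fun x => match x with end) (fun x => match x with end)
    (fun x => match x with end).

Lemma empty_hom_unique (Z : metCH_sep) (f : mc_hom empty_space Z) : f = empty_hom Z.
Proof. by apply: mc_hom_ext => -[]. Qed.

Section equaliser.
Context (X Y : metCH_sep) (u v : mc_hom X Y).

Definition equaliser_set := [set x : X | u x = v x].

Lemma closed_equaliser_set : closed equaliser_set.
Proof.
rewrite -openC openE => x /= uvx.
have := @mc_hausdorff Y; rewrite open_hausdorff => /(_ (u x) (v x)).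
case=> [|[U V] /= [Ux Vx] [oU oV /eqP UV]]; first exact/eqP.
rewrite !inE in Ux Vx.
have : nbhs x (u @^-1` U `&` v @^-1` V).
  apply: open_nbhs_nbhs; split=> //; apply: openI;
  by apply: (proj1 (continuousP _)) => //; exact: mc_fun_cont.
apply: filterS => z [Uz Vz] uvz.
have : (U `&` V) (u z) by split=> //; rewrite uvz.
by rewrite UV.
Qed.

Local Notation E := (set_type equaliser_set).

Definition equaliser_d (p q : E) := mc_d (set_val p) (set_val q).

Lemma equaliser_d_sep p q : equaliser_d p q = 0 -> equaliser_d q p = 0 -> p = q.
Proof. by move=> pq qp; apply: val_inj; exact: mc_d_sep. Qed.

Lemma equaliser_d_cont (a : R) : (0 <= a)%R ->
  open [set pq : E * E | a%:E < equaliser_d pq.1 pq.2].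
Proof.
have cval := @initial_continuous _ _ (@set_val X equaliser_set).
move=> _; apply/lower_semicontinuous_open/lower_semicontinuous_mc_d_comp.
- exact: continuous_fst_comp cval.
- exact: continuous_snd_comp cval.
Qed.

Definition equaliser_space : metCH_sep :=
  @MetCHsep E equaliser_d (fun p q => mc_d_ge0 _ _) (fun p => mc_d_refl _)
    (fun p q r => mc_d_triangle _ _ _) equaliser_d_sep
    (hausdorff_set_type (@mc_hausdorff X))
    (compact_set_type (subclosed_compact closed_equaliser_set (@mc_compact X) (@subsetT _ _)))
    equaliser_d_cont.

Definition equaliser_incl : mc_hom equaliser_space X :=
  @MCHom equaliser_space X set_val (@initial_continuous _ _ _) (fun p q => lexx _).

Lemma equaliser_inclP (p : equaliser_space) : u (equaliser_incl p) = v (equaliser_incl p).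
Proof. exact: set_valP p. Qed.

Section equaliser_factor.
Context (W : metCH_sep) (h : mc_hom W X) (huv : forall w, u (h w) = v (h w)).

Definition equaliser_factor_fun (w : W) : equaliser_space := exist _ (h w) (mem_set (huv w)).

Lemma continuous_equaliser_factor : continuous equaliser_factor_fun.
Proof.
apply/continuousP => O /open_set_valP [U oU <-].
exact: (proj1 (continuousP _) (@mc_fun_cont _ _ h)).
Qed.

Definition equaliser_factor : mc_hom W equaliser_space :=
  MCHom continuous_equaliser_factor (fun w w' => mc_fun_nonexp h w w').

End equaliser_factor.

End equaliser.

(** * Pushouts *)

Section pushout.
Context (C A B : metCH_sep) (f : mc_hom C A) (g : mc_hom C B).
Local Notation S := (coprod A B).

Definition cocone (Z : metCH_sep) (h : mc_hom A Z) (k : mc_hom B Z) :=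
  forall c, h (f c) = k (g c).

Definition cocone_d (Z : metCH_sep) (h : mc_hom A Z) (k : mc_hom B Z) (p : S * S) :=
  mc_d (copair h k p.1) (copair h k p.2).

Definition cocone_dists : set (S * S -> \bar R) :=
  [set F | F = cst 0 \/ exists (Z : metCH_sep) (h : mc_hom A Z) (k : mc_hom B Z),
    cocone h k /\ F = cocone_d h k].

Definition pushout_d (x y : S) := ereal_sup [set F (x, y) | F in cocone_dists].

Lemma pushout_d_ub (Z : metCH_sep) (h : mc_hom A Z) (k : mc_hom B Z) x y :
  cocone h k -> mc_d (copair h k x) (copair h k y) <= pushout_d x y.
Proof.
by move=> hk; apply: ereal_sup_ubound; exists (cocone_d h k); first by right; exists Z, h, k.
Qed.

Lemma pushout_d_ge0 x y : 0 <= pushout_d x y.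
Proof. by apply: ereal_sup_ubound; exists (cst 0); first by left. Qed.

Lemma pushout_d_leP x y (b : \bar R) : 0 <= b ->
  (forall (Z : metCH_sep) (h : mc_hom A Z) (k : mc_hom B Z), cocone h k ->
    mc_d (copair h k x) (copair h k y) <= b) -> pushout_d x y <= b.
Proof. by move=> b0 hb; apply/ereal_supP => _ [F [->|[Z [h [k [hk ->]]]]] <-] //; exact: hb. Qed.

Lemma pushout_d_refl x : pushout_d x x = 0.
Proof.
apply/le_anti; rewrite pushout_d_ge0 andbT.
by apply: pushout_d_leP => // Z h k _; rewrite mc_d_refl.
Qed.

Lemma pushout_d_triangle x y z : pushout_d x z <= pushout_d x y + pushout_d y z.
Proof.
apply: pushout_d_leP => [|Z h k hk]; first by rewrite adde_ge0 ?pushout_d_ge0.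
by apply: le_trans (mc_d_triangle _ (copair h k y) _) _; apply: leeD; exact: pushout_d_ub.
Qed.

Lemma lower_semicontinuous_pushout_d :
  lower_semicontinuous (fun p : S * S => pushout_d p.1 p.2).
Proof.
rewrite (_ : (fun p => _) = fun p => ereal_sup [set F p | F in cocone_dists]); last first.
  by apply: funext => -[].
apply: lower_semicontinuous_ereal_sup => _ [->|[Z [h [k [_ ->]]]]].
  exact: lower_semicontinuous_cst.
have chk := continuous_copair (@mc_fun_cont _ _ h) (@mc_fun_cont _ _ k).
by apply: lower_semicontinuous_mc_d_comp;
  [exact: continuous_fst_comp chk|exact: continuous_snd_comp chk].
Qed.

Definition pushout_metric : lsc_metric S :=
  LscMetric pushout_d_ge0 pushout_d_refl pushout_d_triangle lower_semicontinuous_pushout_d.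

Let hS := hausdorff_coprod (@mc_hausdorff A) (@mc_hausdorff B).
Let cS := compact_coprod (@mc_compact A) (@mc_compact B).

Definition pushout_space := quotient_space pushout_metric hS cS.

Lemma pushout_d_cinl a a' : pushout_d (cinl a) (cinl a') <= mc_d a a'.
Proof. by apply: pushout_d_leP => [|Z h k _]; [exact: mc_d_ge0|exact: mc_fun_nonexp]. Qed.

Lemma pushout_d_cinr b b' : pushout_d (cinr b) (cinr b') <= mc_d b b'.
Proof. by apply: pushout_d_leP => [|Z h k _]; [exact: mc_d_ge0|exact: mc_fun_nonexp]. Qed.

Definition pushout_inl : mc_hom A pushout_space :=
  quotient_hom (d := pushout_metric) hS cS (@continuous_cinl A B) pushout_d_cinl.

Definition pushout_inr : mc_hom B pushout_space :=
  quotient_hom (d := pushout_metric) hS cS (@continuous_cinr A B) pushout_d_cinr.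

Lemma pushout_cocone : cocone pushout_inl pushout_inr.
Proof.
move=> c; apply/qpi_eqP; split; apply/le_anti; rewrite pushout_d_ge0 andbT;
  by apply: pushout_d_leP => // Z h k hk /=; rewrite hk mc_d_refl.
Qed.

Section pushout_universal.
Context (Z : metCH_sep) (h : mc_hom A Z) (k : mc_hom B Z) (hk : cocone h k).

Definition pushout_desc : mc_hom pushout_space Z :=
  quotient_lift (d := pushout_metric) hS cS
    (continuous_copair (@mc_fun_cont _ _ h) (@mc_fun_cont _ _ k))
    (fun x y => pushout_d_ub x y hk).

Lemma pushout_desc_inl a : pushout_desc (pushout_inl a) = h a.
Proof. exact: quotient_liftE. Qed.

Lemma pushout_desc_inr b : pushout_desc (pushout_inr b) = k b.
Proof. exact: quotient_liftE. Qed.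

Lemma pushout_desc_unique (w : mc_hom pushout_space Z) :
  (forall a, w (pushout_inl a) = h a) -> (forall b, w (pushout_inr b) = k b) ->
  w = pushout_desc.
Proof.
move=> wh wk; apply: quotient_hom_ext => -[[] x].
- by rewrite quotient_liftE; exact: wh x.
- by rewrite quotient_liftE; exact: wk x.
Qed.

End pushout_universal.

End pushout.

(** * Gluing along an isometry *)

Definition isometric (X Y : metCH_sep) (m : mc_hom X Y) :=
  forall x y, mc_d (m x) (m y) = mc_d x y.

Section coprod_d.
Context (A B : metCH_sep).
Local Notation S := (coprod A B).

Definition coprod_d (x y : S) : \bar R :=
  match x, y with
  | existT true a, existT true a' => mc_d a a'
  | existT false b, existT false b' => mc_d b b'
  | _, _ => +oo
  end.

Lemma coprod_d_ge0 x y : 0 <= coprod_d x y.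
Proof. by case: x y => -[] x [] [] y /=; rewrite ?mc_d_ge0 ?leey. Qed.

Lemma coprod_d_refl x : coprod_d x x = 0.
Proof. by case: x => -[] x /=; rewrite mc_d_refl. Qed.

Lemma coprod_d_triangle x y z : coprod_d x z <= coprod_d x y + coprod_d y z.
Proof.
case: x y z => -[] x [] [] y [] [] z /=; rewrite ?mc_d_triangle //;
  by rewrite ?addey ?addye ?leey // -ltNye (lt_le_trans _ (mc_d_ge0 _ _)) ?ltNy0.
Qed.

Lemma lower_semicontinuous_coprod_d :
  lower_semicontinuous (fun p : S * S => coprod_d p.1 p.2).
Proof.
apply: lower_semicontinuous_coprod2 => -[] [] /=;
  by [exact: (@lower_semicontinuous_mc_d A)|exact: (@lower_semicontinuous_mc_d B)|
      exact: lower_semicontinuous_cst].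
Qed.

Lemma lower_semicontinuous_coprod_d_comp (T : topologicalType) (u v : T -> S) :
  continuous u -> continuous v -> lower_semicontinuous (fun t => coprod_d (u t) (v t)).
Proof.
by move=> cu cv; exact: (lower_semicontinuous_comp (continuous_pair cu cv)
  lower_semicontinuous_coprod_d).
Qed.

End coprod_d.

Section glue.
Context (C A B : metCH_sep) (f : mc_hom C A) (g : mc_hom C B) (f_iso : isometric f).
Local Notation S := (coprod A B).
Local Notation sD := (@coprod_d A B).

Definition glue_l (x : S) (c : C) := Order.min (sD x (cinl (f c))) (sD x (cinr (g c))).
Definition glue_r (c : C) (y : S) := Order.min (sD (cinl (f c)) y) (sD (cinr (g c)) y).

(* The length of a path from [x] to [y] that enters the glued copy of [C] at [cc.1]
   and leaves it at [cc.2]; distances inside the copy are measured in [B]. *)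
Definition glue_path (x y : S) (cc : C * C) :=
  glue_l x cc.1 + (mc_d (g cc.1) (g cc.2) + glue_r cc.2 y).

Definition glue_d (x y : S) :=
  Order.min (sD x y) (ereal_inf (range (glue_path x y))).

Lemma glue_l_ge0 x c : 0 <= glue_l x c.
Proof. by rewrite le_min !coprod_d_ge0. Qed.

Lemma glue_r_ge0 c y : 0 <= glue_r c y.
Proof. by rewrite le_min !coprod_d_ge0. Qed.

Lemma glue_path_ge0 x y cc : 0 <= glue_path x y cc.
Proof. by rewrite !adde_ge0 ?glue_l_ge0 ?glue_r_ge0 ?mc_d_ge0. Qed.

Lemma glue_l_triangle x y c : glue_l x c <= sD x y + glue_l y c.
Proof.
rewrite /glue_l ge_min; case: (leP (sD y (cinl (f c))) (sD y (cinr (g c)))) => _;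
  by rewrite coprod_d_triangle ?orbT.
Qed.

Lemma glue_r_triangle c x y : glue_r c y <= glue_r c x + sD x y.
Proof.
rewrite /glue_r ge_min; case: (leP (sD (cinl (f c)) x) (sD (cinr (g c)) x)) => _;
  by rewrite coprod_d_triangle ?orbT.
Qed.

Lemma mc_d_g_le_coprod_d c c' (i j : bool) :
  mc_d (g c) (g c') <=
  sD (if i then cinl (f c) else cinr (g c)) (if j then cinl (f c') else cinr (g c')).
Proof.
case: i j => -[] //=; rewrite ?leey // f_iso; exact: mc_fun_nonexp.
Qed.

Lemma mc_d_g_le_glue c x c' : mc_d (g c) (g c') <= glue_r c x + glue_l x c'.
Proof.
rewrite /glue_r /glue_l.
case: (leP (sD (cinl (f c)) x) (sD (cinr (g c)) x)) => _;
case: (leP (sD x (cinl (f c'))) (sD x (cinr (g c')))) => _;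
  apply: le_trans (coprod_d_triangle _ x _); [
  exact: (mc_d_g_le_coprod_d _ _ true true)|exact: (mc_d_g_le_coprod_d _ _ true false)|
  exact: (mc_d_g_le_coprod_d _ _ false true)|exact: (mc_d_g_le_coprod_d _ _ false false)].
Qed.

Lemma glue_path_trianglel x y z cc : glue_path x z cc <= sD x y + glue_path y z cc.
Proof. by apply: le_trans (leeD (glue_l_triangle x y cc.1) (lexx _)) _; rewrite -addeA. Qed.

Lemma glue_path_triangler x y z cc : glue_path x z cc <= glue_path x y cc + sD y z.
Proof.
apply: le_trans (leeD (lexx _) (leeD (lexx _) (glue_r_triangle cc.2 y z))) _.
by rewrite /glue_path !addeA.
Qed.

Lemma glue_path_triangle x y z c1 c1' c2 c2' :
  glue_path x z (c1, c2') <= glue_path x y (c1, c1') + glue_path y z (c2, c2').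
Proof.
have g_le : mc_d (g c1) (g c2') <=
    mc_d (g c1) (g c1') + (glue_r c1' y + glue_l y c2) + mc_d (g c2) (g c2').
  apply: le_trans (mc_d_triangle _ (g c1') _) _; rewrite -addeA leeD //.
  by apply: le_trans (mc_d_triangle _ (g c2) _) _; rewrite leeD // mc_d_g_le_glue.
by apply: le_trans (leeD (lexx _) (leeD g_le (lexx _))) _; rewrite /glue_path /= !addeA.
Qed.

Lemma glue_inf_ge0 x y : 0 <= ereal_inf (range (glue_path x y)).
Proof. by apply/ereal_infP => _ [cc _ <-]; exact: glue_path_ge0. Qed.

Lemma glue_inf_le x y cc : ereal_inf (range (glue_path x y)) <= glue_path x y cc.
Proof. by apply: ereal_inf_lbound; exists cc. Qed.

Lemma glue_d_ge0 x y : 0 <= glue_d x y.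
Proof. by rewrite le_min coprod_d_ge0 glue_inf_ge0. Qed.

Lemma glue_d_refl x : glue_d x x = 0.
Proof. by apply/le_anti; rewrite glue_d_ge0 ge_min coprod_d_refl lexx. Qed.

Lemma glue_d_triangle x y z : glue_d x z <= glue_d x y + glue_d y z.
Proof.
rewrite /glue_d.
case: (leP (sD x y) (ereal_inf (range (glue_path x y)))) => _;
case: (leP (sD y z) (ereal_inf (range (glue_path y z)))) => _;
  rewrite ge_min.
- by rewrite coprod_d_triangle.
- apply/orP; right; apply: le_ereal_infDl => [|cc|cc]; rewrite ?coprod_d_ge0 ?glue_path_ge0 //.
  by apply: le_trans (glue_inf_le _ _ cc) _; exact: glue_path_trianglel.
- apply/orP; right; apply: le_ereal_infDr => [|cc|cc]; rewrite ?coprod_d_ge0 ?glue_path_ge0 //.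
  by apply: le_trans (glue_inf_le _ _ cc) _; exact: glue_path_triangler.
- apply/orP; right; apply: le_ereal_infDr => [|cc|[c1 c1']];
    rewrite ?glue_inf_ge0 ?glue_path_ge0 //.
  apply: le_ereal_infDl => [|cc|[c2 c2']]; rewrite ?glue_path_ge0 //.
  by apply: le_trans (glue_inf_le _ _ (c1, c2')) _; exact: glue_path_triangle.
Qed.

Section glue_lsc.
Context (T : topologicalType) (u : T -> S) (w : T -> C).
Hypotheses (cu : continuous u) (cw : continuous w).

Let cfl : continuous (fun t => @cinl A B (f (w t))).
Proof.
exact: (comp_continuous cw (comp_continuous (@mc_fun_cont _ _ f) (@continuous_cinl A B))).
Qed.

Let cgr : continuous (fun t => @cinr A B (g (w t))).
Proof.
exact: (comp_continuous cw (comp_continuous (@mc_fun_cont _ _ g) (@continuous_cinr A B))).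
Qed.

Lemma lower_semicontinuous_glue_l : lower_semicontinuous (fun t => glue_l (u t) (w t)).
Proof.
apply: lower_semicontinuous_min.
- exact: lower_semicontinuous_coprod_d_comp cu cfl.
- exact: lower_semicontinuous_coprod_d_comp cu cgr.
Qed.

Lemma lower_semicontinuous_glue_r : lower_semicontinuous (fun t => glue_r (w t) (u t)).
Proof.
apply: lower_semicontinuous_min.
- exact: lower_semicontinuous_coprod_d_comp cfl cu.
- exact: lower_semicontinuous_coprod_d_comp cgr cu.
Qed.

End glue_lsc.

Lemma lower_semicontinuous_glue_path :
  lower_semicontinuous (fun q : (S * S) * (C * C) => glue_path q.1.1 q.1.2 q.2).
Proof.
have c1 (X Y Z : topologicalType) : continuous (fun q : (X * Y) * Z => q.1.1).
  exact: (continuous_fst_comp (@continuous_fst _ _)).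
have c2 (X Y Z : topologicalType) : continuous (fun q : (X * Y) * Z => q.1.2).
  exact: (continuous_fst_comp (@continuous_snd _ _)).
have c3 (X Y Z : topologicalType) : continuous (fun q : X * (Y * Z) => q.2.1).
  exact: (continuous_snd_comp (@continuous_fst _ _)).
have c4 (X Y Z : topologicalType) : continuous (fun q : X * (Y * Z) => q.2.2).
  exact: (continuous_snd_comp (@continuous_snd _ _)).
have cg := @mc_fun_cont _ _ g.
apply: lower_semicontinuousD => [q|q||]; first exact: glue_l_ge0.
- by rewrite adde_ge0 ?mc_d_ge0 ?glue_r_ge0.
- exact: lower_semicontinuous_glue_l (c1 _ _ _) (c3 _ _ _).
apply: lower_semicontinuousD => [q|q||]; first exact: mc_d_ge0.
- exact: glue_r_ge0.
- exact: lower_semicontinuous_mc_d_comp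
    (comp_continuous (c3 _ _ _) cg) (comp_continuous (c4 _ _ _) cg).
- exact: lower_semicontinuous_glue_r (c2 _ _ _) (c4 _ _ _).
Qed.

Lemma lower_semicontinuous_glue_d :
  lower_semicontinuous (fun p : S * S => glue_d p.1 p.2).
Proof.
apply: lower_semicontinuous_min; first exact: lower_semicontinuous_coprod_d.
have cCC : compact [set: C * C] by rewrite -setXTT; apply: compact_setX; exact: mc_compact.
exact (lower_semicontinuous_ereal_inf cCC lower_semicontinuous_glue_path).
Qed.

Definition glue_metric : lsc_metric S :=
  LscMetric glue_d_ge0 glue_d_refl glue_d_triangle lower_semicontinuous_glue_d.

Let hS := hausdorff_coprod (@mc_hausdorff A) (@mc_hausdorff B).
Let cS := compact_coprod (@mc_compact A) (@mc_compact B).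

Definition glue_space := quotient_space glue_metric hS cS.

Lemma glue_d_cinl a a' : glue_d (cinl a) (cinl a') <= mc_d a a'.
Proof. by rewrite /glue_d ge_min /= lexx. Qed.

Lemma glue_d_cinr b b' : glue_d (cinr b) (cinr b') <= mc_d b b'.
Proof. by rewrite /glue_d ge_min /= lexx. Qed.

Definition glue_inl : mc_hom A glue_space :=
  quotient_hom (d := glue_metric) hS cS (@continuous_cinl A B) glue_d_cinl.

Definition glue_inr : mc_hom B glue_space :=
  quotient_hom (d := glue_metric) hS cS (@continuous_cinr A B) glue_d_cinr.

Lemma glue_cocone : cocone f g glue_inl glue_inr.
Proof.
move=> c; apply/qpi_eqP; split; apply/le_anti; rewrite glue_d_ge0 andbT /glue_d ge_min;
  apply/orP; right; apply: le_trans (glue_inf_le _ _ (c, c)) _;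
  by rewrite /glue_path /glue_l /glue_r /= !mc_d_refl (min_l (leey _)) (min_r (leey _)) !adde0.
Qed.

Lemma glue_inr_isometric : isometric glue_inr.
Proof.
move=> b b'; apply/le_anti; rewrite mc_fun_nonexp /glue_inr quotient_hom_d le_min /= lexx /=.
apply/ereal_infP => _ [[c c'] _ <-].
rewrite /glue_path /glue_l /glue_r /= !(min_r (leey _)).
apply: le_trans (mc_d_triangle _ (g c) _) _; rewrite leeD //.
exact: mc_d_triangle.
Qed.

Lemma glue_identified a b : glue_inl a = glue_inr b ->
  exists c, mc_d a (f c) = 0 /\ mc_d (g c) b = 0.
Proof.
move=> /qpi_eqP [+ _]; rewrite /= /glue_d /= (min_r (leey _)) => inf0.
(* Otherwise [c |-> d(a, f c) + d(g c, b)] is bounded away from 0 on the compact [C],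
   and so is the infimum over paths. *)
apply: contrapT => /forallNP nab.
have G0 c : 0 < mc_d a (f c) + mc_d (g c) b.
  rewrite lt0e adde_ge0 ?mc_d_ge0 // andbT; apply/negP => /eqP sum0; apply: (nab c).
  by split; apply/le_anti; rewrite mc_d_ge0 -sum0 ?leeDl ?leeDr ?mc_d_ge0.
have lG : lower_semicontinuous (fun c => mc_d a (f c) + mc_d (g c) b).
  apply: lower_semicontinuousD => [c|c||]; rewrite ?mc_d_ge0 //.
  - exact (lower_semicontinuous_mc_d_comp (cst_continuous (x := a)) (@mc_fun_cont _ _ f)).
  - exact (lower_semicontinuous_mc_d_comp (@mc_fun_cont _ _ g) (cst_continuous (x := b))).
have := ereal_inf_gt0_compact (@mc_compact C) lG G0; rewrite ltNge => /negP; apply.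
rewrite -inf0; apply/ereal_infP => _ [[c c'] _ <-].
apply: le_trans (ereal_inf_lbound (ex_intro2 _ _ c I erefl)) _.
rewrite /glue_path /glue_l /glue_r /= (min_l (leey _)) (min_r (leey _)) leeD //.
exact: mc_d_triangle.
Qed.

End glue.

(** * Regular monomorphisms *)

Definition is_initial (C : category) (i : C) := @is_terminal (op C) i.

Definition is_pushout (C : category) (c a b : C) (f : hom c a) (g : hom c b)
    (p : C) (i : hom a p) (j : hom b p) :=
  @is_pullback (op C) a b c f g p i j.

Definition is_equaliser (C : category) (a b : C) (u v : hom a b) (e : C) (m : hom e a) :=
  @is_coequaliser (op C) b a u v e m.

Definition regular_mono (C : category) (e a : C) (m : hom e a) :=
  @regular_epi (op C) a e m.

Lemma MetCH_compE (X Y Z : MetCH_sep) (g : hom Y Z) (f : hom X Y) x :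
  (comp g f : mc_hom X Z) x = g (f x).
Proof. by []. Qed.

Lemma MetCH_comp_eqP (X Y Y' Z : MetCH_sep) (g : hom Y Z) (f : hom X Y)
    (g' : hom Y' Z) (f' : hom X Y') :
  comp g f = comp g' f' <-> forall x, g (f x) = g' (f' x).
Proof.
split=> [gf x|gf]; first by rewrite -!MetCH_compE gf.
exact: mc_hom_ext.
Qed.

Lemma empty_space_initial : is_initial (empty_space : MetCH_sep).
Proof. by move=> Z; exists (empty_hom Z); split=> // h _; rewrite (empty_hom_unique h). Qed.

Lemma pushout_space_is_pushout (C A B : MetCH_sep) (f : hom C A) (g : hom C B) :
  is_pushout f g (pushout_inl f g) (pushout_inr f g).
Proof.
split; first by apply/MetCH_comp_eqP; exact: pushout_cocone.
move=> Z h k /MetCH_comp_eqP hk; exists (pushout_desc hk); split.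
  by split; apply: mc_hom_ext => x; [exact: pushout_desc_inl|exact: pushout_desc_inr].
move=> w [wh wk]; apply: esym; apply: pushout_desc_unique => x.
- by rewrite -wh.
- by rewrite -wk.
Qed.

Lemma equaliser_space_is_equaliser (X Y : MetCH_sep) (u v : hom X Y) :
  is_equaliser u v (equaliser_incl u v).
Proof.
split; first by apply/MetCH_comp_eqP; exact: equaliser_inclP.
move=> W h /MetCH_comp_eqP huv; exists (equaliser_factor huv); split.
  exact: mc_hom_ext.
move=> k kh; apply: mc_hom_ext => w; apply: val_inj.
by rewrite /= -kh.
Qed.

Lemma isometric_inj (X Y : metCH_sep) (m : mc_hom X Y) : isometric m -> injective m.
Proof. by move=> mi x y mxy; apply: mc_d_le0_sep; rewrite -mi mxy mc_d_refl. Qed.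

Lemma regular_mono_isometric (E A : MetCH_sep) (m : hom E A) :
  regular_mono m -> isometric m.
Proof.
(* [m] is isomorphic to the inclusion of the equalising subspace. *)
move=> [D [u [v [muv meq]]]]; have /MetCH_comp_eqP muv' := muv.
pose e := equaliser_factor muv'.
have [k [km _]] := meq _ _ (proj1 (equaliser_space_is_equaliser u v)).
have [k0 [_ k0u]] := meq _ m muv.
have mke : mc_comp m (mc_comp k e) = m.
  by apply: mc_hom_ext => x; exact: (congr1 (fun h : mc_hom _ A => h (e x)) km).
have ke : mc_comp k e = mc_id E by rewrite -(k0u _ mke); apply: k0u; exact: mc_hom_ext.
have kex x : k (e x) = x by exact: (congr1 (fun h : mc_hom E E => h x) ke).
move=> x y; apply/le_anti; rewrite mc_fun_nonexp /=.
by rewrite -{1}(kex x) -{1}(kex y); exact: mc_fun_nonexp.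
Qed.

Lemma isometric_pushout (C A B P : MetCH_sep) (f : hom C A) (g : hom C B)
    (i : hom A P) (j : hom B P) :
  isometric f -> is_pushout f g i j -> isometric j.
Proof.
move=> f_iso [_ puniv].
have [w [[_ wj] _]] := puniv _ _ _ (proj2 (MetCH_comp_eqP _ _ _ _) (glue_cocone g f_iso)).
move=> b b'; apply/le_anti; rewrite mc_fun_nonexp /=.
rewrite -(glue_inr_isometric g f_iso) -wj.
exact: (mc_fun_nonexp w (j b) (j b')).
Qed.

Lemma isometric_factor (B P W : metCH_sep) (p : mc_hom B P) (h : mc_hom W P) :
  isometric p -> (forall w, exists b, p b = h w) ->
  exists k : mc_hom W B, forall w, p (k w) = h w.
Proof.
move=> p_iso hp; pose k w := sval (cid (hp w)).
have pk w : p (k w) = h w by rewrite /k; case: cid.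
(* [p] is a closed map (compact source, Hausdorff target), so [k] is continuous. *)
have ck : continuous k.
  apply/continuous_closedP => F cF.
  have -> : k @^-1` F = h @^-1` (p @` F).
    apply/seteqP; split=> w /=; first by exists (k w); rewrite ?pk.
    by move=> [b Fb]; rewrite -pk => /(isometric_inj p_iso) <-.
  apply: (proj1 (continuous_closedP _) (@mc_fun_cont _ _ h)).
  apply: compact_closed; first exact: mc_hausdorff.
  apply: continuous_compact; first exact/continuous_subspaceT/mc_fun_cont.
  exact: subclosed_compact cF (@mc_compact B) _.
have nk w w' : mc_d (k w) (k w') <= mc_d w w'.
  by rewrite -p_iso !pk; exact: mc_fun_nonexp.
by exists (MCHom ck nk).
Qed.

Lemma isometric_regular_mono (B P : MetCH_sep) (p : hom B P) :
  isometric p -> regular_mono p.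
Proof.
(* [p] equalises its cokernel pair, obtained by gluing [P] to itself along [p]. *)
move=> p_iso; exists (glue_space p p_iso), (glue_inl p p_iso), (glue_inr p p_iso).
split; first by apply/MetCH_comp_eqP; exact: glue_cocone.
move=> W h /MetCH_comp_eqP hpp.
have [k pk] : exists k : mc_hom W B, forall w, p (k w) = h w.
  apply: (isometric_factor p_iso) => w; have [b [hb bh]] := glue_identified (hpp w).
  by exists b; apply: mc_d_le0_sep; rewrite ?hb ?bh.
exists k; split; first exact: mc_hom_ext.
move=> k' k'h; apply: mc_hom_ext => w; apply: (isometric_inj p_iso).
by rewrite pk -k'h.
Qed.

Theorem theorem4p8 : regular_category (op MetCH_sep).
Proof.
split; first split.
- by exists empty_space; exact: empty_space_initial.
- move=> A B C f g; exists (pushout_space f g), (pushout_inl f g), (pushout_inr f g).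
  exact: pushout_space_is_pushout.
- move=> A B f P p1 p2 _; exists (equaliser_space p1 p2), (equaliser_incl p1 p2).
  exact: equaliser_space_is_equaliser.
- move=> A B C f g P p1 p2 /regular_mono_isometric f_iso po.
  exact/isometric_regular_mono/(isometric_pushout f_iso po).
Qed.
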